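(* Let $n\ge 2$, $d\ge1$, $r\ge1$ be integers with $n\ge d$ and $dr\equiv0\pmod n$. Then $Q_n^-(d,r)\cong Q_n(d,r)$.
   Context: $\mathbb{Z}_2^n=\{0,1\}^n$ with coordinatewise addition mod 2; $e_i$ is the $i$-th standard basis vector, subscripts read modulo $n$. The recursive cube of rings $Q_n(d,r)$ (for $n\ge d$, $dr\equiv0\pmod n$) is the simple graph with vertex set $\mathbb{Z}_2^n\times\mathbb{Z}_r$ in which $(a,x)$ is adjacent to $(a+e_{i+dx},x)$ for $1\le i\le d$ and to $(a,x\pm1)$. The general recursive cube of rings $Q_n^-(d,r)$ is the simple graph with vertex set $\mathbb{Z}_2^n\times\{0,1,\dots,r-1\}$ in which $(a,x)$ and $(b,y)$ are adjacent iff either $a=b$ and $x\equiv y\pm1\pmod r$, or $x=y$ and $b=a+e_{i-dx}$ for some $1\le i\le d$. *)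

From mathcomp Require Import all_boot.
Set Implicit Arguments. Unset Strict Implicit. Unset Printing Implicit Defensive.

(* Vertices: Z_2^n x Z_r, with Z_2^n = {ffun 'I_n -> bool} and Z_r = 'I_r
   (the representatives {0,...,r-1}). Coordinates are 0-indexed: the paper's
   e_j (j an integer read mod n, with indices 1..n) is the 0-indexed
   coordinate (j - 1) mod n. *)
Definition vtx (n r : nat) := ({ffun 'I_n -> bool} * 'I_r)%type.

Definition flip (n : nat) (a : {ffun 'I_n -> bool}) (k : nat) : {ffun 'I_n -> bool} :=
  [ffun j : 'I_n => addb (a j) (val j == k %% n)].

Definition ring_adj (r : nat) (x y : 'I_r) : bool :=
  (x != y) && ((val y == (val x).+1 %% r) || (val x == (val y).+1 %% r)).

(* recursive cube of rings Q_n(d,r): (a,x) ~ (a + e_{i + d x}, x), 1 <= i <= d *)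
Definition Qadj (n d r : nat) : rel (vtx n r) := fun u v =>
  ((u.1 == v.1) && ring_adj u.2 v.2) ||
  ((u.2 == v.2) &&
   [exists i : 'I_d, v.1 == flip u.1 ((i.+1).-1 + d * val u.2)]).

(* general recursive cube of rings Q_n^-(d,r): (a,x) ~ (a + e_{i - d x}, x);
   the index (i - d x) - 1 mod n is computed in nat as
   (i - 1 + (n - (d x mod n))) mod n. *)
Definition Qminus_adj (n d r : nat) : rel (vtx n r) := fun u v =>
  ((u.1 == v.1) && ring_adj u.2 v.2) ||
  ((u.2 == v.2) &&
   [exists i : 'I_d, v.1 == flip u.1 ((i.+1).-1 + (n - (d * val u.2) %% n))]).

Definition isomorphic (T : finType) (e1 e2 : rel T) : Prop :=
  exists f : T -> T, bijective f /\ forall u v, e1 u v = e2 (f u) (f v).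
Arguments Qadj : clear implicits.
Arguments Qminus_adj : clear implicits.

From mathcomp Require Import all_boot.
From mathcomp Require Import zify.
Set Implicit Arguments. Unset Strict Implicit. Unset Printing Implicit Defensive.

(* Permute the coordinates of Z_2^n by the reflection j |-> d - 1 - j of Z_n
   (0-indexed) and keep the ring coordinate.  A cube edge of Q_n^-(d,r) at
   level x flips coordinate i - d x; the reflection sends it to
   (d - 1 - i) + d x, and as i runs over 0..d-1 so does d - 1 - i, so cube
   edges go exactly onto the cube edges of Q_n(d,r).  Ring edges do not
   involve Z_2^n at all. *)

Section Reflection.

Variables (n k : nat).

(* [(k + (n - j)) %% n] is the reflection [k - j] of Z_n, computed in nat. *)
Lemma reflect_modE j m : j <= n ->
  (k + (n - j) == m %[mod n]) = (j + m == k %[mod n]).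
Proof.
by move=> le_jn; rewrite -(eqn_modDr j) -addnA subnK // modnDr eq_sym addnC.
Qed.

Lemma reflect_ord_subproof (j : 'I_n) : (k + (n - j)) %% n < n.
Proof. by rewrite ltn_pmod // (leq_ltn_trans _ (ltn_ord j)). Qed.

Definition reflect_ord (j : 'I_n) : 'I_n := Ordinal (reflect_ord_subproof j).

Lemma reflect_ord_eqmod (j : 'I_n) m :
  (val (reflect_ord j) == m %% n) = (val j == (k + (n - m %% n)) %% n).
Proof.
have lt_jn := ltn_ord j; have n_gt0 : 0 < n by apply: leq_ltn_trans lt_jn.
have le_mn : m %% n <= n by rewrite ltnW // ltn_pmod.
rewrite /= -[val j in RHS](modn_small lt_jn) [RHS]eq_sym.
by rewrite !reflect_modE ?(ltnW lt_jn) // modnDml addnC.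
Qed.

Lemma reflect_ordK : involutive reflect_ord.
Proof.
move=> j; apply/val_inj/eqP; have j_mod := modn_small (ltn_ord j).
by rewrite -[X in _ == X]j_mod reflect_ord_eqmod j_mod.
Qed.

Definition reflect_cube (a : {ffun 'I_n -> bool}) : {ffun 'I_n -> bool} :=
  [ffun j => a (reflect_ord j)].

Lemma reflect_cubeK : involutive reflect_cube.
Proof. by move=> a; apply/ffunP => j; rewrite !ffunE reflect_ordK. Qed.

Lemma reflect_cube_inj : injective reflect_cube.
Proof. exact: inv_inj reflect_cubeK. Qed.

Lemma reflect_cube_flip a m :
  reflect_cube (flip a m) = flip (reflect_cube a) (k + (n - m %% n)).
Proof. by apply/ffunP => j; rewrite !ffunE reflect_ord_eqmod. Qed.

Lemma reflect_shift i D : 0 < n -> i <= k ->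
  k + (n - (i + (n - D %% n)) %% n) = k - i + D %[mod n].
Proof.
move=> n_gt0 le_ik.
have le_jn : (i + (n - D %% n)) %% n <= n by rewrite ltnW // ltn_pmod.
have le_Dn : D %% n <= n by rewrite ltnW // ltn_pmod.
apply/eqP; rewrite reflect_modE // modnDml.
have -> : i + (n - D %% n) + (k - i + D) = (D %/ n).+1 * n + k.
  by have := divn_eq D n; lia.
by rewrite modnMDl.
Qed.

End Reflection.

Lemma flip_eqmod n (a : {ffun 'I_n -> bool}) m m' :
  m = m' %[mod n] -> flip a m = flip a m'.
Proof. by move=> eq_mm'; apply/ffunP => j; rewrite !ffunE eq_mm'. Qed.

Lemma reflect_cube_flip_shift n d (a b : {ffun 'I_n -> bool}) (i : 'I_d) D :
  0 < n ->
  (b == flip a (i + (n - D %% n))) =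
  (reflect_cube d.-1 b == flip (reflect_cube d.-1 a) (rev_ord i + D)).
Proof.
move=> n_gt0.
have le_id : i <= d.-1 by rewrite -ltnS prednK // (leq_ltn_trans _ (ltn_ord i)).
rewrite -(inj_eq (@reflect_cube_inj n d.-1)) reflect_cube_flip.
by rewrite (flip_eqmod _ (reflect_shift _ n_gt0 le_id)) /= subnS predn_sub.
Qed.

Theorem mainTheorem4 (n d r : nat) :
  2 <= n -> 1 <= d -> 1 <= r -> d <= n -> n %| d * r ->
  isomorphic (Qminus_adj n d r) (Qadj n d r).
Proof.
move=> n_ge2 _ _ _ _; have n_gt0 : 0 < n by apply: leq_trans n_ge2.
pose f (u : vtx n r) : vtx n r := (reflect_cube d.-1 u.1, u.2).
have fK : involutive f by case=> a x; rewrite /f /= reflect_cubeK.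
exists f; split; first exact: inv_bij fK.
move=> [a x] [b y]; rewrite /Qminus_adj /Qadj /= (inj_eq (@reflect_cube_inj _ _)).
congr (_ || (_ && _)); apply/existsP/existsP => -[i].
  by rewrite reflect_cube_flip_shift // => ?; exists (rev_ord i).
by move=> ?; exists (rev_ord i); rewrite reflect_cube_flip_shift // rev_ordK.
Qed.
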